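(* Let $d\ge 2$ and $0<\delta<\frac{\pi}{2}$. A smooth convex body $D\subset S^d$ is of constant diameter $\delta$ if and only if it is of constant width $\delta$.
   Context: $S^d$ is the unit sphere in $E^{d+1}$; $|ab|$ denotes spherical distance (length of the shorter great-circle arc $ab$). A set containing no pair of antipodes is convex if it contains the arc joining any two of its points; a closed convex set with non-empty interior is a convex body. A hemisphere is the intersection of $S^d$ with a closed half-space of $E^{d+1}$ bounded by a hyperplane through the origin. A hemisphere $H$ supports a convex body $C$ at $p$ if $C\subset H$ and $p\in\mathrm{bd}(H)\cap C$; $p\in\mathrm{bd}(C)$ is a smooth point if exactly one hemisphere supports $C$ at $p$, and $C$ is smooth if all its boundary points are smooth. For different, non-opposite hemispheres $G,H$, the lune $G\cap H$ has thickness equal to the spherical distance between the centers of the $(d-1)$-dimensional hemispheres $\mathrm{bd}(G)\cap H$ and $\mathrm{bd}(H)\cap G$. For a hemisphere $K$ supporting $C$, $\mathrm{width}_K(C)$ is the thickness of a narrowest lune of the form $K\cap K^*$ containing $C$; $C$ is of constant width $w$ if $\mathrm{width}_K(C)=w$ for every supporting hemisphere $K$ of $C$. A convex body $D$ of diameter $\delta$ is of constant diameter $\delta$ if for every $p\in\mathrm{bd}(D)$ there is $p'\in\mathrm{bd}(D)$ with $|pp'|=\delta$. *)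

From Stdlib Require Import Reals Lra.
Open Scope R_scope.

(* Points of E^{d+1} are functions nat -> R; coordinates 0..d are used, and
   points of S^d are required to vanish beyond index d (canonical representatives). *)
Definition vec := nat -> R.

Definition dot (d : nat) (x y : vec) : R := sum_f_R0 (fun i => x i * y i) d.
Definition dist2 (d : nat) (x y : vec) : R :=
  sum_f_R0 (fun i => (x i - y i) * (x i - y i)) d.
Definition vopp (x : vec) : vec := fun i => - x i.

Definition on_sphere (d : nat) (x : vec) : Prop :=
  (forall i, (d < i)%nat -> x i = 0) /\ dot d x x = 1.

Definition sdist (d : nat) (a b : vec) : R := acos (dot d a b).

Definition set := vec -> Prop.

Definition subset_sphere (d : nat) (C : set) : Prop :=
  forall x, C x -> on_sphere d x.

(* the shorter great-circle arc joining non-antipodal a, b *)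
Definition on_arc (d : nat) (a b p : vec) : Prop :=
  on_sphere d p /\
  exists l m, 0 <= l /\ 0 <= m /\ forall i, p i = l * a i + m * b i.

Definition no_antipodes (d : nat) (C : set) : Prop :=
  forall a b, C a -> C b -> b <> vopp a.

Definition convex (d : nat) (C : set) : Prop :=
  subset_sphere d C /\ no_antipodes d C /\
  forall a b p, C a -> C b -> on_arc d a b p -> C p.

Definition closure_pt (d : nat) (C : set) (x : vec) : Prop :=
  on_sphere d x /\
  forall eps, 0 < eps -> exists y, C y /\ dist2 d x y < eps * eps.

Definition closed (d : nat) (C : set) : Prop :=
  forall x, closure_pt d C x -> C x.

Definition interior_pt (d : nat) (C : set) (x : vec) : Prop :=
  C x /\ exists eps, 0 < eps /\
    forall y, on_sphere d y -> dist2 d x y < eps * eps -> C y.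

Definition boundary_pt (d : nat) (C : set) (x : vec) : Prop :=
  closure_pt d C x /\ ~ interior_pt d C x.

Definition convex_body (d : nat) (C : set) : Prop :=
  convex d C /\ closed d C /\ exists x, interior_pt d C x.

Definition hemi (d : nat) (n : vec) : set :=
  fun x => on_sphere d x /\ 0 <= dot d n x.
Definition hemi_bd (d : nat) (n : vec) : set :=
  fun x => on_sphere d x /\ dot d n x = 0.

Definition supports_at (d : nat) (n : vec) (C : set) (p : vec) : Prop :=
  on_sphere d n /\ (forall x, C x -> hemi d n x) /\ hemi_bd d n p /\ C p.

Definition supporting (d : nat) (n : vec) (C : set) : Prop :=
  exists p, supports_at d n C p.

Definition smooth_point (d : nat) (C : set) (p : vec) : Prop :=
  boundary_pt d C p /\
  exists n, supports_at d n C p /\ forall m, supports_at d m C p -> m = n.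

Definition smooth (d : nat) (C : set) : Prop :=
  forall p, boundary_pt d C p -> smooth_point d C p.

(* c is the center of the (d-1)-dimensional hemisphere bd(G) ∩ H,
   where G, H have centers n, m *)
Definition center_of_bd_cap (d : nat) (n m c : vec) : Prop :=
  hemi_bd d n c /\
  forall x, hemi_bd d n x -> (0 <= dot d m x <-> 0 <= dot d c x).

Definition lune_thickness (d : nat) (n m : vec) (t : R) : Prop :=
  exists c1 c2, center_of_bd_cap d n m c1 /\ center_of_bd_cap d m n c2 /\
    t = sdist d c1 c2.

Definition is_glb (E : R -> Prop) (m : R) : Prop :=
  (forall x, E x -> m <= x) /\ (forall b, (forall x, E x -> b <= x) -> b <= m).

(* width_K(C) = w, K with center n: thickness of a narrowest lune K ∩ K*
   containing C (taken as the infimum of such thicknesses) *)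
Definition width_K (d : nat) (n : vec) (C : set) (w : R) : Prop :=
  is_glb (fun t => exists m, on_sphere d m /\ m <> n /\ m <> vopp n /\
            (forall x, C x -> hemi d n x /\ hemi d m x) /\
            lune_thickness d n m t) w.

Definition constant_width (d : nat) (C : set) (w : R) : Prop :=
  forall n, supporting d n C -> width_K d n C w.

Definition diameter (d : nat) (C : set) (delta : R) : Prop :=
  is_lub (fun t => exists a b, C a /\ C b /\ t = sdist d a b) delta.

Definition constant_diameter (d : nat) (D : set) (delta : R) : Prop :=
  convex_body d D /\ diameter d D delta /\
  forall p, boundary_pt d D p ->
    exists p', boundary_pt d D p' /\ sdist d p p' = delta.

(* Everything is reduced to inner products.  For unit vectors p, q with p.q = k in
   (-1, 1), the unit tangent t = (q - k p) / sqrt (1 - k^2) of the arc from p towards q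
   satisfies q = k p + sqrt (1 - k^2) t.  It identifies the centres of the boundary
   half-spheres of a lune, so that the lune with centres n, m has thickness
   acos (- n.m) (lune_thickness_iff), and width_K becomes an infimum of such values
   (width_K_iff).  It also describes supporting hemispheres: at a point b of a convex
   body minimizing x.a, the hemisphere centred at the tangent from b towards a
   supports the body (min_support, via a first-order optimality argument along arcs).
   Such minimizers exist by sequential compactness of closed subsets of S^d.

   Constant diameter -> constant width: a supporting hemisphere at p0 is, by
   smoothness, the one centred at the tangent from p0 towards a point p1 at distance
   delta; the lune cut by the tangent from p1 towards p0 realises the width delta.
   Constant width -> constant diameter: the point of D nearest to -a lies within delta
   of a, and for a boundary point p the farthest point of D is exactly at distance
   delta, since otherwise tilting the supporting hemisphere at p yields a lune
   thinner than delta. *)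

From Stdlib Require Import Reals Lra Lia Psatz FunctionalExtensionality Classical ClassicalEpsilon.
Open Scope R_scope.

Definition lin (a : R) (x : vec) (b : R) (y : vec) : vec := fun i => a * x i + b * y i.

Definition supported (d : nat) (x : vec) : Prop := forall i, (d < i)%nat -> x i = 0.

Lemma dot_comm d x y : dot d x y = dot d y x.
Proof. unfold dot; induction d as [|d IH]; simpl; [ring | rewrite IH; ring]. Qed.

Lemma dot_lin_l d a x b y z : dot d (lin a x b y) z = a * dot d x z + b * dot d y z.
Proof. unfold dot, lin; induction d as [|d IH]; simpl; [ring | rewrite IH; ring]. Qed.

Lemma dot_lin_r d a x b y z : dot d z (lin a x b y) = a * dot d z x + b * dot d z y.
Proof. rewrite dot_comm, dot_lin_l, (dot_comm d x), (dot_comm d y); ring. Qed.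

Lemma dot_vopp_r d x y : dot d x (vopp y) = - dot d x y.
Proof. unfold dot, vopp; induction d as [|d IH]; simpl; [ring | rewrite IH; ring]. Qed.

Lemma dot_self_nonneg d x : 0 <= dot d x x.
Proof. unfold dot; induction d as [|d IH]; simpl; nra. Qed.

Lemma dot_self_zero d x : dot d x x = 0 -> forall i, (i <= d)%nat -> x i = 0.
Proof.
  unfold dot; induction d as [|d IH]; simpl; intros Hx i Hi.
  - assert (i = 0%nat) by lia; subst; nra.
  - pose proof (dot_self_nonneg d x) as Hd; unfold dot in Hd.
    destruct (Nat.eq_dec i (S d)) as [->|Hne]; [nra|].
    apply IH; [nra | lia].
Qed.

Lemma dist2_dot d x y : dist2 d x y = dot d x x - 2 * dot d x y + dot d y y.
Proof.
  unfold dist2, dot; induction d as [|d IH]; simpl; [ring | rewrite IH; ring].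
Qed.

Lemma supported_lin d a x b y :
  supported d x -> supported d y -> supported d (lin a x b y).
Proof. intros Hx Hy i Hi; unfold lin; rewrite Hx, Hy by exact Hi; ring. Qed.

Lemma on_sphere_lin d a x b y :
  supported d x -> supported d y ->
  dot d (lin a x b y) (lin a x b y) = 1 -> on_sphere d (lin a x b y).
Proof. intros Hx Hy H; split; [apply supported_lin |]; assumption. Qed.

Lemma sphere_dot_bound d x y : on_sphere d x -> on_sphere d y -> -1 <= dot d x y <= 1.
Proof.
  intros [_ Hx] [_ Hy].
  pose proof (dot_self_nonneg d (lin 1 x (-1) y)) as Hm.
  pose proof (dot_self_nonneg d (lin 1 x 1 y)) as Hp.
  rewrite !dot_lin_l, !dot_lin_r, (dot_comm d y x) in Hm, Hp; lra.
Qed.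

Lemma vopp_sphere d x : on_sphere d x -> on_sphere d (vopp x).
Proof.
  intros [Zx Nx]; split.
  - intros i Hi; unfold vopp; rewrite Zx by exact Hi; ring.
  - rewrite dot_vopp_r, dot_comm, dot_vopp_r; lra.
Qed.

Lemma sphere_eq d x y : on_sphere d x -> on_sphere d y -> dot d x y = 1 -> x = y.
Proof.
  intros [Zx Nx] [Zy Ny] Hxy.
  assert (H0 : dot d (lin 1 x (-1) y) (lin 1 x (-1) y) = 0).
  { rewrite !dot_lin_l, !dot_lin_r, (dot_comm d y x); lra. }
  extensionality i; destruct (Nat.le_gt_cases i d) as [Hi|Hi].
  - pose proof (dot_self_zero d _ H0 i Hi) as E; unfold lin in E; lra.
  - rewrite Zx, Zy by exact Hi; reflexivity.
Qed.

Lemma sphere_antipode d x y : on_sphere d x -> on_sphere d y -> dot d x y = -1 -> y = vopp x.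
Proof.
  intros Sx Sy H; symmetry; apply (sphere_eq d).
  - apply vopp_sphere; exact Sx.
  - exact Sy.
  - rewrite dot_comm, dot_vopp_r, dot_comm; lra.
Qed.

Lemma sphere_dot_open d x y : on_sphere d x -> on_sphere d y ->
  y <> x -> y <> vopp x -> -1 < dot d x y < 1.
Proof.
  intros Sx Sy Hne Hna; pose proof (sphere_dot_bound d x y Sx Sy).
  destruct (Req_dec (dot d x y) 1) as [E|E].
  { exfalso; apply Hne; symmetry; apply sphere_eq with d; assumption. }
  destruct (Req_dec (dot d x y) (-1)) as [E'|E'].
  { exfalso; apply Hna; apply sphere_antipode with d; assumption. }
  lra.
Qed.

Lemma sphere_dot_partner d x y : on_sphere d x -> -1 < dot d x y < 1 ->
  y <> x /\ y <> vopp x.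
Proof.
  intros [_ Nx] H; split; intros E; subst y.
  - lra.
  - rewrite dot_vopp_r, Nx in H; lra.
Qed.

Lemma bessel d m p n : on_sphere d m -> on_sphere d p -> on_sphere d n -> dot d p n = 0 ->
  dot d m p * dot d m p + dot d m n * dot d m n <= 1.
Proof.
  intros [_ Nm] [_ Np] [_ Nn] Hpn.
  pose proof (dot_self_nonneg d (lin 1 m (-1) (lin (dot d m p) p (dot d m n) n))) as H.
  rewrite ?dot_lin_l, ?dot_lin_r in H.
  rewrite (dot_comm d p m), (dot_comm d n m), (dot_comm d n p), Hpn, Nm, Np, Nn in H. nra.
Qed.

(* csin k = sqrt (1 - k^2), the sine of the angle whose cosine is k. *)
Definition csin (k : R) : R := sqrt (1 - k * k).

Lemma csin_pos k : -1 < k < 1 -> 0 < csin k.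
Proof. intros H; apply sqrt_lt_R0; nra. Qed.

Lemma csin_sq k : -1 < k < 1 -> csin k * csin k = 1 - k * k.
Proof. intros H; apply sqrt_sqrt; nra. Qed.

Lemma div_nonneg_iff a s : 0 < s -> (0 <= a / s <-> 0 <= a).
Proof.
  intros Hs; split; intros H.
  - replace a with (a / s * s) by (field; lra). apply Rmult_le_pos; lra.
  - apply Rmult_le_pos; [exact H | left; apply Rinv_0_lt_compat; exact Hs].
Qed.

Lemma orthonormal_lin_sphere d p n a b : on_sphere d p -> on_sphere d n -> dot d p n = 0 ->
  a * a + b * b = 1 -> on_sphere d (lin a p b n).
Proof.
  intros [Zp Np] [Zn Nn] Hpn Hab. apply on_sphere_lin; [exact Zp | exact Zn |].
  rewrite !dot_lin_l, !dot_lin_r, (dot_comm d n p), Np, Nn, Hpn. lra.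
Qed.

Definition tangent (d : nat) (p q : vec) : vec :=
  lin (/ csin (dot d p q)) q (- dot d p q / csin (dot d p q)) p.

Section Tangent.
Variables (d : nat) (p q : vec).
Hypotheses (Sp : on_sphere d p) (Sq : on_sphere d q) (Hpq : -1 < dot d p q < 1).

Lemma dot_tangent x :
  dot d x (tangent d p q) = (dot d x q - dot d p q * dot d x p) / csin (dot d p q).
Proof.
  pose proof (csin_pos _ Hpq). unfold tangent; rewrite dot_lin_r; field; lra.
Qed.

Lemma tangent_orth : dot d p (tangent d p q) = 0.
Proof.
  pose proof (csin_pos _ Hpq). destruct Sp as [_ Np].
  rewrite dot_tangent, Np; field; lra.
Qed.

Lemma tangent_sphere : on_sphere d (tangent d p q).
Proof.
  pose proof (csin_pos _ Hpq) as Hs. pose proof (csin_sq _ Hpq) as Hss.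
  destruct Sp as [Zp Np], Sq as [Zq Nq].
  apply on_sphere_lin; [exact Zq | exact Zp |].
  fold (tangent d p q); rewrite dot_tangent, dot_comm, dot_tangent, Nq,
    (dot_comm d (tangent d p q) p), tangent_orth, (dot_comm d q p).
  replace (1 - dot d p q * dot d p q) with (csin (dot d p q) * csin (dot d p q)) by lra.
  field; lra.
Qed.

Lemma dot_tangent_decomp x :
  dot d x q = dot d p q * dot d x p + csin (dot d p q) * dot d x (tangent d p q).
Proof. pose proof (csin_pos _ Hpq). rewrite dot_tangent; field; lra. Qed.

End Tangent.

(* The tangents at both ends of an arc make an angle of pi minus its length. *)
Lemma tangent_dot_swap d n m : on_sphere d n -> on_sphere d m -> -1 < dot d n m < 1 ->
  dot d (tangent d n m) (tangent d m n) = - dot d n m.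
Proof.
  intros Sn Sm H. assert (H' : -1 < dot d m n < 1) by (rewrite dot_comm; exact H).
  pose proof (csin_pos _ H) as Hs. pose proof (csin_sq _ H) as Hss.
  rewrite dot_tangent by assumption.
  rewrite (dot_comm d (tangent d n m) n), tangent_orth, (dot_comm d (tangent d n m) m),
    dot_tangent by assumption.
  destruct Sm as [_ Nm]; rewrite Nm, (dot_comm d m n).
  replace (1 - dot d n m * dot d n m) with (csin (dot d n m) * csin (dot d n m)) by lra.
  field; lra.
Qed.

Section Lune.
Variables (d : nat) (n m : vec).
Hypotheses (Sn : on_sphere d n) (Sm : on_sphere d m) (Hnm : -1 < dot d n m < 1).

Lemma tangent_center : center_of_bd_cap d n m (tangent d n m).
Proof.
  pose proof (csin_pos _ Hnm) as Hs.
  split; [split; [apply tangent_sphere | apply tangent_orth]; assumption |].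
  intros x [_ Hnx].
  rewrite (dot_comm d (tangent d n m) x), dot_tangent, (dot_comm d x n), Hnx by assumption.
  replace ((dot d x m - dot d n m * 0) / csin (dot d n m)) with (dot d x m / csin (dot d n m))
    by (field; lra).
  rewrite (dot_comm d m x), div_nonneg_iff by exact Hs; reflexivity.
Qed.

Lemma center_unique c : center_of_bd_cap d n m c -> c = tangent d n m.
Proof.
  intros [[Sc Hnc] Hc].
  set (t := tangent d n m).
  assert (St : on_sphere d t) by (apply tangent_sphere; assumption).
  assert (Hnt : dot d n t = 0) by (apply tangent_orth; assumption).
  pose proof (sphere_dot_bound d c t Sc St) as Hct.
  destruct (Req_dec (dot d c t) 1) as [E|E]; [apply sphere_eq with d; assumption |].
  (* otherwise the unit vector x along c - t lies in bd(G), with c.x > 0 but m.x < 0 *)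
  exfalso.
  destruct Sc as [Zc Nc], St as [Zt Nt].
  set (r := sqrt (2 - 2 * dot d c t)).
  assert (Hr : 0 < r) by (apply sqrt_lt_R0; lra).
  assert (Hrr : r * r = 2 - 2 * dot d c t) by (apply sqrt_sqrt; lra).
  set (x := lin (/ r) c (- / r) t).
  assert (Hx : hemi_bd d n x).
  { split.
    - apply on_sphere_lin; [exact Zc | exact Zt |].
      unfold x; rewrite !dot_lin_l, !dot_lin_r, Nc, Nt, (dot_comm d t c).
      apply Rmult_eq_reg_r with (r * r); [| nra]. field_simplify; [nra | lra].
    - unfold x; rewrite dot_lin_r, Hnc, Hnt; ring. }
  assert (Hcx : 0 < dot d c x).
  { unfold x; rewrite dot_lin_r, Nc.
    replace (/ r * 1 + - / r * dot d c t) with ((1 - dot d c t) / r) by (field; lra).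
    apply Rdiv_lt_0_compat; lra. }
  assert (Hmx : dot d m x < 0).
  { pose proof (dot_tangent d n m Hnm x) as Etx. fold t in Etx.
    rewrite (dot_comm d x n), (proj2 Hx), Rmult_0_r, Rminus_0_r in Etx.
    assert (Htx : dot d t x < 0).
    { unfold x; rewrite dot_lin_r, Nt, (dot_comm d t c).
      replace (/ r * dot d c t + - / r * 1) with ((dot d c t - 1) / r) by (field; lra).
      apply Rdiv_neg_pos; lra. }
    rewrite (dot_comm d t x), Etx in Htx. rewrite dot_comm.
    pose proof (csin_pos _ Hnm).
    apply Rmult_lt_reg_r with (/ csin (dot d n m)); [apply Rinv_0_lt_compat; lra | lra]. }
  pose proof (proj2 (Hc x Hx) (Rlt_le _ _ Hcx)). lra.
Qed.

End Lune.

Lemma lune_thickness_iff d n m t : on_sphere d n -> on_sphere d m -> -1 < dot d n m < 1 ->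
  (lune_thickness d n m t <-> t = acos (- dot d n m)).
Proof.
  intros Sn Sm Hnm.
  assert (Hmn : -1 < dot d m n < 1) by (rewrite dot_comm; exact Hnm).
  split.
  - intros [c1 [c2 [H1 [H2 ->]]]]; unfold sdist.
    rewrite (center_unique d n m Sn Sm Hnm c1 H1), (center_unique d m n Sm Sn Hmn c2 H2).
    rewrite tangent_dot_swap by assumption; reflexivity.
  - intros ->. exists (tangent d n m), (tangent d m n).
    split; [apply tangent_center; assumption |].
    split; [apply tangent_center; assumption |].
    unfold sdist; rewrite tangent_dot_swap by assumption; reflexivity.
Qed.

Lemma acos_antimono x y : -1 <= x -> x <= y -> y <= 1 -> acos y <= acos x.
Proof.
  intros H1 H2 H3. destruct (Rle_or_lt (acos y) (acos x)) as [h|h]; [exact h |].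
  pose proof (acos_bound x); pose proof (acos_bound y).
  pose proof (cos_decreasing_1 (acos x) (acos y) ltac:(lra) ltac:(lra) ltac:(lra) ltac:(lra) h).
  rewrite !cos_acos in * by lra. lra.
Qed.

Lemma acos_inj x y : -1 <= x <= 1 -> -1 <= y <= 1 -> acos x = acos y -> x = y.
Proof. intros Hx Hy E. rewrite <- (cos_acos x), <- (cos_acos y), E by assumption; reflexivity. Qed.

Lemma le_acos_iff delta x : 0 <= delta <= PI -> -1 <= x <= 1 ->
  (delta <= acos x <-> x <= cos delta).
Proof.
  intros Hd Hx. pose proof (COS_bound delta) as Hc. rewrite <- (acos_cos delta) at 1 by exact Hd.
  split; intros H.
  - destruct (Rle_or_lt x (cos delta)) as [h|h]; [exact h |].
    pose proof (acos_antimono (cos delta) x ltac:(lra) ltac:(lra) ltac:(lra)).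
    pose proof (acos_inj x (cos delta) Hx ltac:(lra) ltac:(lra)). lra.
  - apply acos_antimono; lra.
Qed.

Lemma acos_le_iff delta x : 0 <= delta <= PI -> -1 <= x <= 1 ->
  (acos x <= delta <-> cos delta <= x).
Proof.
  intros Hd Hx. pose proof (COS_bound delta) as Hc. rewrite <- (acos_cos delta) at 1 by exact Hd.
  split; intros H.
  - destruct (Rle_or_lt (cos delta) x) as [h|h]; [exact h |].
    pose proof (acos_antimono x (cos delta) ltac:(lra) ltac:(lra) ltac:(lra)).
    pose proof (acos_inj x (cos delta) Hx ltac:(lra) ltac:(lra)). lra.
  - apply acos_antimono; lra.
Qed.

Lemma cos_acute delta : 0 < delta < PI / 2 -> 0 < cos delta < 1.
Proof.
  intros Hd. pose proof PI_RGT_0. split; [apply cos_gt_0; lra |].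
  rewrite <- cos_0. apply cos_decreasing_1; lra.
Qed.

Lemma sdist_le_iff d a b delta : on_sphere d a -> on_sphere d b -> 0 <= delta <= PI ->
  (sdist d a b <= delta <-> cos delta <= dot d a b).
Proof. intros Sa Sb Hd; apply acos_le_iff; [exact Hd | apply sphere_dot_bound; assumption]. Qed.

Lemma sdist_eq_iff d a b delta : on_sphere d a -> on_sphere d b -> 0 <= delta <= PI ->
  (sdist d a b = delta <-> dot d a b = cos delta).
Proof.
  intros Sa Sb Hd. pose proof (sphere_dot_bound d a b Sa Sb). unfold sdist; split.
  - intros <-; rewrite cos_acos by lra; reflexivity.
  - intros ->; apply acos_cos; exact Hd.
Qed.

Definition lune_partner (d : nat) (n : vec) (C : set) (m : vec) : Prop :=
  on_sphere d m /\ -1 < dot d n m < 1 /\ forall x, C x -> hemi d n x /\ hemi d m x.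

Definition lune_thicknesses (d : nat) (n : vec) (C : set) : R -> Prop :=
  fun t => exists m, lune_partner d n C m /\ t = acos (- dot d n m).

Lemma is_glb_ext (E F : R -> Prop) w : (forall t, E t <-> F t) -> is_glb E w -> is_glb F w.
Proof.
  intros EF [H1 H2]; split.
  - intros x Fx; apply H1, EF, Fx.
  - intros b Hb; apply H2; intros x Ex; apply Hb, EF, Ex.
Qed.

Lemma width_K_iff d n C w : on_sphere d n ->
  (width_K d n C w <-> is_glb (lune_thicknesses d n C) w).
Proof.
  intros Sn.
  assert (E : forall t, lune_thicknesses d n C t <->
    exists m, on_sphere d m /\ m <> n /\ m <> vopp n /\
      (forall x, C x -> hemi d n x /\ hemi d m x) /\ lune_thickness d n m t).
  { intros t; split.
    - intros [m [[Sm [Hnm HC]] ->]].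
      destruct (sphere_dot_partner d n m Sn Hnm) as [H1 H2].
      exists m; do 4 (split; [assumption |]).
      apply lune_thickness_iff; auto.
    - intros [m [Sm [H1 [H2 [HC Ht]]]]].
      pose proof (sphere_dot_open d n m Sn Sm H1 H2) as Hnm.
      exists m; split; [split; [| split] ; assumption |].
      apply lune_thickness_iff; assumption. }
  split; apply is_glb_ext; intros t; rewrite E; tauto.
Qed.

Lemma tilt d p n eps : on_sphere d p -> on_sphere d n -> dot d p n = 0 -> 0 < eps ->
  exists y, on_sphere d y /\ dist2 d p y < eps * eps /\ dot d n y < 0.
Proof.
  intros Sp Sn Hpn He. pose proof Sp as [_ Np]; pose proof Sn as [_ Nn].
  set (b := Rmin (1/2) (eps/2)).
  assert (Hb : 0 < b <= 1/2 /\ b <= eps/2) by (unfold b, Rmin; destruct Rle_dec; lra).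
  assert (Hbr : -1 < b < 1) by lra.
  pose proof (csin_pos b Hbr) as Ha. pose proof (csin_sq b Hbr) as Haa.
  set (a := csin b) in *.
  assert (Ha2 : 1 - b * b <= a) by nra.
  exists (lin a p (- b) n).
  split; [apply orthonormal_lin_sphere; [exact Sp | exact Sn | exact Hpn | lra] |].
  rewrite dist2_dot; split;
    rewrite ?dot_lin_l, ?dot_lin_r, ?(dot_comm d n p), ?Np, ?Nn, ?Hpn; nra.
Qed.

Lemma boundary_of_support d n D p : supports_at d n D p -> boundary_pt d D p.
Proof.
  intros [Sn [HD [[Sp Hnp] Dp]]]. split.
  - split; [exact Sp |]. intros eps He. exists p; split; [exact Dp |].
    rewrite dist2_dot. destruct Sp as [_ Np]. rewrite Np. nra.
  - intros [_ [eps [He Hint]]].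
    destruct (tilt d p n eps Sp Sn ltac:(rewrite dot_comm; exact Hnp) He) as [y [Sy [Dy Ny]]].
    destruct (HD y (Hint y Sy Dy)) as [_ h]. lra.
Qed.

Definition basis (j : nat) : vec := fun i => if Nat.eqb i j then 1 else 0.

Lemma dot_basis d x j : (j <= d)%nat -> dot d x (basis j) = x j.
Proof.
  unfold dot, basis. induction d as [|d IH]; intros Hj; cbn [sum_f_R0].
  - destruct (Nat.eqb_spec 0 j); [subst; ring | lia].
  - destruct (Nat.eqb_spec (S d) j) as [<-|Hne].
    + assert (Z : forall k, (k <= d)%nat ->
        sum_f_R0 (fun i => x i * (if Nat.eqb i (S d) then 1 else 0)) k = 0).
      { induction k as [|k IHk]; intros Hk; cbn [sum_f_R0].
        - destruct (Nat.eqb_spec 0 (S d)); [lia | ring].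
        - rewrite IHk by lia. destruct (Nat.eqb_spec (S k) (S d)); [lia | ring]. }
      rewrite Z by lia; ring.
    + rewrite IH by lia; ring.
Qed.

Lemma basis_supported d j : (j <= d)%nat -> supported d (basis j).
Proof.
  intros Hj i Hi. unfold basis. destruct (Nat.eqb_spec i j); [lia | reflexivity].
Qed.

Lemma exists_orthogonal d a : (1 <= d)%nat -> exists e, on_sphere d e /\ dot d a e = 0.
Proof.
  intros Hd.
  assert (S0 : on_sphere d (basis 0))
    by (split; [apply basis_supported; lia | rewrite dot_basis by lia; reflexivity]).
  assert (S1 : on_sphere d (basis 1))
    by (split; [apply basis_supported; lia | rewrite dot_basis by lia; reflexivity]).
  assert (E01 : dot d (basis 0) (basis 1) = 0) by (rewrite dot_basis by lia; reflexivity).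
  set (a0 := a 0%nat); set (a1 := a 1%nat).
  destruct (Req_dec (a0 * a0 + a1 * a1) 0) as [Z|Z].
  - exists (basis 0). split; [exact S0 |].
    rewrite dot_basis by lia. fold a0. nra.
  - set (r := sqrt (a0 * a0 + a1 * a1)).
    assert (Hr : 0 < r) by (apply sqrt_lt_R0; nra).
    assert (Hrr : r * r = a0 * a0 + a1 * a1) by (apply sqrt_sqrt; nra).
    exists (lin (- a1 / r) (basis 0) (a0 / r) (basis 1)).
    split; [apply orthonormal_lin_sphere; [exact S0 | exact S1 | exact E01 |] |].
    + apply Rmult_eq_reg_r with (r * r); [| nra]. field_simplify; [nra | lra].
    + rewrite !dot_lin_r, !dot_basis by lia. fold a0 a1. field; lra.
Qed.

Definition strictly_incr (f : nat -> nat) : Prop := forall j, (f j < f (S j))%nat.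

Lemma strictly_incr_ge f : strictly_incr f -> forall j, (j <= f j)%nat.
Proof. intros H j; induction j as [|j IH]; [lia | specialize (H j); lia]. Qed.

Lemma strictly_incr_comp f g : strictly_incr f -> strictly_incr g ->
  strictly_incr (fun j => f (g j)).
Proof.
  intros Hf Hg j.
  assert (Mono : forall a b, (a < b)%nat -> (f a < f b)%nat).
  { intros a b Hab; induction Hab as [|b Hab IH]; [apply Hf | specialize (Hf b); lia]. }
  apply Mono, Hg.
Qed.

Lemma Un_cv_subseq w l f : Un_cv w l -> strictly_incr f -> Un_cv (fun j => w (f j)) l.
Proof.
  intros H Hf eps He. destruct (H eps He) as [N HN]. exists N; intros j Hj.
  apply HN. pose proof (strictly_incr_ge f Hf j). lia.
Qed.

Lemma Un_cv_const c : Un_cv (fun _ => c) c.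
Proof.
  intros eps He; exists 0%nat; intros; unfold R_dist; rewrite Rminus_diag, Rabs_R0; exact He.
Qed.

Lemma bounded_cv_subseq (v : nat -> R) : (forall j, -1 <= v j <= 1) ->
  exists f l, strictly_incr f /\ Un_cv (fun j => v (f j)) l.
Proof.
  intros Hb.
  destruct (Bolzano_Weierstrass v (fun c => -1 <= c <= 1) (compact_P3 (-1) 1) Hb) as [l Hl].
  assert (Near : forall N j : nat, exists p, (N <= p)%nat /\ Rabs (v p - l) < / INR (S j)).
  { intros N j. assert (Hp : 0 < / INR (S j)) by (apply Rinv_0_lt_compat, lt_0_INR; lia).
    destruct (Hl (disc l (mkposreal _ Hp)) N) as [p [Hp1 Hp2]].
    - exists (mkposreal _ Hp). intros y Hy; exact Hy.
    - exists p; split; assumption. }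
  set (pick N j := proj1_sig (constructive_indefinite_description _ (Near N j))).
  assert (Hpick : forall N j, (N <= pick N j)%nat /\ Rabs (v (pick N j) - l) < / INR (S j)).
  { intros N j. unfold pick.
    destruct (constructive_indefinite_description _ (Near N j)); assumption. }
  set (f := fix f j := match j with O => pick O O | S j' => pick (S (f j')) (S j') end).
  exists f, l. split.
  - intro j. simpl. destruct (Hpick (S (f j)) (S j)). lia.
  - intros eps He. destruct (archimed_cor1 eps He) as [N [HN1 HN2]].
    exists N. intros j Hj. unfold R_dist.
    assert (Hf : Rabs (v (f j) - l) < / INR (S j))
      by (destruct j; simpl; [apply (Hpick 0%nat 0%nat) | apply (Hpick _ (S j))]).
    eapply Rlt_trans; [apply Hf |]. eapply Rle_lt_trans; [| apply HN1].
    apply Rinv_le_contravar; [apply lt_0_INR; lia | apply le_INR; lia].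
Qed.

Lemma bounded_cv_subseq_coords (u : nat -> vec) N : (forall j i, -1 <= u j i <= 1) ->
  exists f l, strictly_incr f /\ forall i, (i <= N)%nat -> Un_cv (fun j => u (f j) i) (l i).
Proof.
  intros Hb. induction N as [|N IH].
  - destruct (bounded_cv_subseq (fun j => u j 0%nat) (fun j => Hb j 0%nat)) as [f [l [Hf Hl]]].
    exists f, (fun _ => l). split; [exact Hf |].
    intros i Hi. replace i with 0%nat by lia. exact Hl.
  - destruct IH as [f [l [Hf Hl]]].
    destruct (bounded_cv_subseq (fun j => u (f j) (S N)) (fun j => Hb (f j) (S N)))
      as [g [l' [Hg Hl']]].
    exists (fun j => f (g j)), (fun i => if Nat.eqb i (S N) then l' else l i).
    split; [apply strictly_incr_comp; assumption |].
    intros i Hi. destruct (Nat.eqb_spec i (S N)) as [->|Hne]; [exact Hl' |].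
    apply (Un_cv_subseq (fun j => u (f j) i)); [apply Hl; lia | exact Hg].
Qed.

Lemma sphere_coord_bound d x i : on_sphere d x -> -1 <= x i <= 1.
Proof.
  intros [Zx Nx]. destruct (Nat.le_gt_cases i d) as [Hi|Hi]; [| rewrite Zx by exact Hi; lra].
  assert (x i * x i <= dot d x x); [| nra].
  unfold dot. clear Zx Nx. induction d as [|d IH]; cbn [sum_f_R0].
  - replace i with 0%nat by lia; lra.
  - pose proof (dot_self_nonneg d x) as H0; unfold dot in H0.
    destruct (Nat.eq_dec i (S d)) as [->|Hne]; [nra |].
    specialize (IH ltac:(lia)). nra.
Qed.

Lemma Un_cv_dot d (u v : nat -> vec) b c :
  (forall i, (i <= d)%nat -> Un_cv (fun j => u j i) (b i)) ->
  (forall i, (i <= d)%nat -> Un_cv (fun j => v j i) (c i)) ->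
  Un_cv (fun j => dot d (u j) (v j)) (dot d b c).
Proof.
  intros Hu Hv. unfold dot. induction d as [|d IH]; cbn [sum_f_R0].
  - apply CV_mult; [apply Hu | apply Hv]; lia.
  - apply CV_plus; [apply IH; intros; [apply Hu | apply Hv]; lia |].
    apply CV_mult; [apply Hu | apply Hv]; lia.
Qed.

Lemma closed_sphere_cv_subseq d D (u : nat -> vec) : closed d D -> subset_sphere d D ->
  (forall j, D (u j)) ->
  exists f b, strictly_incr f /\ D b /\
    forall w, Un_cv (fun j => dot d (u (f j)) w) (dot d b w).
Proof.
  intros Hcl Hsub Du.
  destruct (bounded_cv_subseq_coords u d (fun j i => sphere_coord_bound d _ i (Hsub _ (Du j))))
    as [f [l [Hf Hl]]].
  set (b i := if Nat.leb i d then l i else 0).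
  assert (Hb : forall i, (i <= d)%nat -> Un_cv (fun j => u (f j) i) (b i)).
  { intros i Hi. unfold b. rewrite (proj2 (Nat.leb_le i d) Hi). apply Hl, Hi. }
  assert (Cw : forall w, Un_cv (fun j => dot d (u (f j)) w) (dot d b w))
    by (intros w; apply (Un_cv_dot d _ (fun _ => w)); [exact Hb | intros; apply Un_cv_const]).
  assert (Sb : on_sphere d b).
  { split.
    - intros i Hi. unfold b. rewrite (proj2 (Nat.leb_gt i d) Hi). reflexivity.
    - apply UL_sequence with (fun _ => 1); [| apply Un_cv_const].
      apply Un_cv_ext with (fun j => dot d (u (f j)) (u (f j))); [| apply Un_cv_dot; exact Hb].
      intros j; apply (Hsub _ (Du (f j))). }
  exists f, b. split; [exact Hf | split; [| exact Cw]].
  apply Hcl. split; [exact Sb |]. intros eps He.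
  destruct (Cw b (eps * eps / 2) ltac:(nra)) as [N HN].
  exists (u (f N)). split; [apply Du |].
  specialize (HN N (le_n _)). unfold R_dist in HN. rewrite (proj2 Sb) in HN. apply Rabs_def2 in HN.
  rewrite dist2_dot, (dot_comm d b (u (f N))), (proj2 Sb), (proj2 (Hsub _ (Du (f N)))). lra.
Qed.

Lemma Un_cv_inv_succ : Un_cv (fun j => / INR (S j)) 0.
Proof.
  intros eps He. destruct (archimed_cor1 eps He) as [N [HN1 HN2]].
  exists N. intros j Hj. unfold R_dist. rewrite Rminus_0_r, Rabs_pos_eq.
  - eapply Rle_lt_trans; [| apply HN1].
    apply Rinv_le_contravar; [apply lt_0_INR; lia | apply le_INR; lia].
  - left; apply Rinv_0_lt_compat, lt_0_INR; lia.
Qed.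

(* b is a point of D minimizing x.a, i.e. a point of D nearest to -a. *)
Definition minimizes (d : nat) (D : set) (a b : vec) : Prop :=
  D b /\ forall x, D x -> dot d b a <= dot d x a.

Lemma closed_attains_min d D a : closed d D -> subset_sphere d D -> (exists x, D x) ->
  on_sphere d a -> exists b, minimizes d D a b.
Proof.
  intros Hcl Hsub [x0 Dx0] Sa.
  set (E r := exists x, D x /\ r = - dot d x a).
  assert (HE : bound E).
  { exists 1. intros r [x [Dx ->]]. pose proof (sphere_dot_bound d x a (Hsub x Dx) Sa). lra. }
  destruct (completeness E HE (ex_intro _ _ (ex_intro _ x0 (conj Dx0 eq_refl)))) as [m [Hm1 Hm2]].
  assert (Hlow : forall x, D x -> - m <= dot d x a).
  { intros x Dx. assert (Ex : E (- dot d x a)) by (exists x; auto). specialize (Hm1 _ Ex). lra. }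
  assert (Near : forall j : nat, exists x, D x /\ dot d x a <= - m + / INR (S j)).
  { intros j. assert (Hp : 0 < / INR (S j)) by (apply Rinv_0_lt_compat, lt_0_INR; lia).
    apply NNPP. intros Hn.
    assert (Hub : is_upper_bound E (m - / INR (S j))).
    { intros r [x [Dx ->]]. destruct (Rle_or_lt (- dot d x a) (m - / INR (S j))) as [h|h];
        [exact h | exfalso; apply Hn; exists x; split; [exact Dx | lra]]. }
    specialize (Hm2 _ Hub). lra. }
  set (u j := proj1_sig (constructive_indefinite_description _ (Near j))).
  assert (Hu : forall j, D (u j) /\ dot d (u j) a <= - m + / INR (S j))
    by (intros j; unfold u; destruct (constructive_indefinite_description _ (Near j)); assumption).
  destruct (closed_sphere_cv_subseq d D u Hcl Hsub (fun j => proj1 (Hu j))) as [f [b [Hf [Db Cb]]]].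
  exists b. split; [exact Db |]. intros x Dx.
  apply Rle_trans with (- m); [| apply Hlow, Dx].
  replace (- m) with (- m + 0) by ring.
  apply (Rle_cv_lim (Un := fun j => dot d (u (f j)) a) (Vn := fun j => - m + / INR (S j))).
  - intros j. apply Rle_trans with (- m + / INR (S (f j))); [apply Hu |].
    apply Rplus_le_compat_l, Rinv_le_contravar; [apply lt_0_INR; lia |].
    apply le_INR. pose proof (strictly_incr_ge f Hf j). lia.
  - apply Cb.
  - apply CV_plus; [apply Un_cv_const | apply Un_cv_inv_succ].
Qed.

(* A convex set contains no antipodes, so inner products of its points exceed -1. *)
Lemma convex_dot_gt d D x y : convex d D -> D x -> D y -> -1 < dot d x y.
Proof.
  intros [Hsub [Hna _]] Dx Dy. pose proof (sphere_dot_bound d x y (Hsub x Dx) (Hsub y Dy)).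
  destruct (Req_dec (dot d x y) (-1)) as [E|E]; [| lra].
  exfalso. apply (Hna x y Dx Dy). apply sphere_antipode with d; auto.
Qed.

Lemma nonneg_of_perturbation g C : (forall mu, 0 < mu -> 0 <= g + mu * C) -> 0 <= g.
Proof.
  intros H. destruct (Rle_or_lt 0 g) as [h|h]; [exact h | exfalso].
  pose proof (Rabs_pos C). pose proof (Rle_abs C).
  set (mu := - g / (2 * (Rabs C + 1))).
  assert (Hmu : 0 < mu) by (apply Rdiv_lt_0_compat; lra).
  assert (Hmu2 : mu * (2 * (Rabs C + 1)) = - g) by (unfold mu; field; lra).
  specialize (H mu Hmu). nra.
Qed.

(* |b + mu x|^2 = 1 + 2 mu (x.b) + mu^2 is positive when x is not antipodal to b. *)
Lemma arc_norm_pos h mu : -1 < h -> 0 < mu -> 0 < 1 + 2 * mu * h + mu * mu.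
Proof.
  intros Hh Hmu. pose proof (Rle_0_sqr (1 - mu)). unfold Rsqr in *.
  assert (0 < 2 * mu * (1 + h)) by (apply Rmult_lt_0_compat; lra). nra.
Qed.

(* Minimality of b compared with the point (b + mu x) / |b + mu x| of the arc from b to x. *)
Lemma min_along_arc d D a b x mu : convex d D -> minimizes d D a b -> D x -> 0 < mu ->
  dot d b a * sqrt (1 + 2 * mu * dot d x b + mu * mu) <= dot d b a + mu * dot d x a.
Proof.
  intros HD [Db Hmin] Dx Hmu. pose proof HD as [Hsub [_ Harc]].
  pose proof (convex_dot_gt d D x b HD Dx Db) as Hh.
  destruct (Hsub b Db) as [Zb Nb], (Hsub x Dx) as [Zx Nx].
  set (h := dot d x b) in *.
  pose proof (arc_norm_pos h mu Hh Hmu) as HQ.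
  pose proof (sqrt_lt_R0 _ HQ) as HN. pose proof (sqrt_sqrt _ (Rlt_le _ _ HQ)) as HNN.
  set (N := sqrt (1 + 2 * mu * h + mu * mu)) in *.
  assert (Dy : D (lin (/ N) b (mu / N) x)).
  { apply (Harc b x); [exact Db | exact Dx |]. split.
    - apply on_sphere_lin; [exact Zb | exact Zx |].
      rewrite !dot_lin_l, !dot_lin_r, Nb, Nx, (dot_comm d b x). fold h.
      apply Rmult_eq_reg_r with (N * N); [| nra]. field_simplify; [nra | lra].
    - exists (/ N), (mu / N). split; [left; apply Rinv_0_lt_compat; exact HN |].
      split; [apply Rlt_le, Rdiv_lt_0_compat; assumption | reflexivity]. }
  pose proof (Hmin _ Dy) as Hy. rewrite dot_lin_l in Hy.
  apply Rmult_le_reg_r with (/ N); [apply Rinv_0_lt_compat; exact HN |].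
  replace (dot d b a * N * / N) with (dot d b a) by (field; lra). lra.
Qed.

Lemma sqrt_arc_bound h mu : -1 < h -> 0 < mu ->
  sqrt (1 + 2 * mu * h + mu * mu) <= 1 + mu * h + mu * mu / 2.
Proof.
  intros Hh Hmu. apply Rsqr_incr_0_var.
  - pose proof (Rle_0_sqr (mu * (h + mu / 2))). unfold Rsqr in *.
    rewrite sqrt_sqrt by (apply Rlt_le, arc_norm_pos; assumption). nra.
  - pose proof (Rle_0_sqr (1 - mu)). unfold Rsqr in *. nra.
Qed.

Lemma min_first_order d D a b x : convex d D -> minimizes d D a b -> D x ->
  dot d b a * dot d x b <= dot d x a.
Proof.
  intros HD Hb Dx. pose proof (convex_dot_gt d D x b HD Dx (proj1 Hb)) as Hh.
  set (k := dot d b a) in *; set (h := dot d x b) in *; set (A := dot d x a) in *.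
  assert (Arc : forall mu, 0 < mu -> k * sqrt (1 + 2 * mu * h + mu * mu) <= k + mu * A)
    by (intros mu Hmu; apply (min_along_arc d D); assumption).
  destruct (Rle_or_lt k 0) as [Hk|Hk].
  - cut (0 <= A - k * h); [lra |].
    apply (nonneg_of_perturbation _ (- k / 2)). intros mu Hmu.
    pose proof (Arc mu Hmu). pose proof (sqrt_arc_bound h mu Hh Hmu).
    assert (k * (1 + mu * h + mu * mu / 2) <= k * sqrt (1 + 2 * mu * h + mu * mu)) by nra.
    apply Rmult_le_reg_l with mu; [exact Hmu | nra].
  - cut (0 <= 2 * k * (A - k * h)); [nra |].
    apply (nonneg_of_perturbation _ (A * A - k * k)). intros mu Hmu.
    pose proof (Arc mu Hmu) as Hm.
    pose proof (arc_norm_pos h mu Hh Hmu) as HQ.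
    pose proof (sqrt_pos (1 + 2 * mu * h + mu * mu)) as HN0.
    pose proof (sqrt_sqrt _ (Rlt_le _ _ HQ)) as HNN.
    set (N := sqrt (1 + 2 * mu * h + mu * mu)) in *.
    assert (HkN : 0 <= k * N) by (apply Rmult_le_pos; lra).
    assert (Sq : (k * N) * (k * N) <= (k + mu * A) * (k + mu * A))
      by (apply Rmult_le_compat; assumption).
    replace ((k * N) * (k * N)) with (k * k * (1 + 2 * mu * h + mu * mu)) in Sq
      by (rewrite <- HNN; ring).
    apply Rmult_le_reg_l with mu; [exact Hmu | nra].
Qed.

Lemma min_support d D a b : convex d D -> on_sphere d a -> minimizes d D a b ->
  -1 < dot d b a < 1 -> supports_at d (tangent d b a) D b.
Proof.
  intros HD Sa Hb Hk. pose proof HD as [Hsub _]. pose proof (Hsub _ (proj1 Hb)) as Sb.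
  pose proof (csin_pos _ Hk) as Hs.
  split; [apply tangent_sphere; assumption |].
  split; [| split; [split; [exact Sb |] | apply Hb]];
    [| rewrite dot_comm; apply tangent_orth; assumption].
  intros x Dx. split; [apply Hsub, Dx |].
  rewrite dot_comm, dot_tangent, div_nonneg_iff by assumption.
  pose proof (min_first_order d D a b x HD Hb Dx). lra.
Qed.

(* For d >= 1 a convex body has boundary points: minimize x.x0 for an interior x0. *)
Lemma exists_boundary_pt d D : (1 <= d)%nat -> convex_body d D -> exists p, boundary_pt d D p.
Proof.
  intros Hd [HD [Hcl [x0 [Dx0 [eps [He Hint]]]]]]. pose proof HD as [Hsub _].
  pose proof (Hsub _ Dx0) as Sx0.
  destruct (exists_orthogonal d x0 Hd) as [e [Se Hx0e]].
  destruct (tilt d x0 e eps Sx0 Se Hx0e He) as [y [Sy [Hy Hey]]].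
  pose proof (Hint y Sy Hy) as Dy.
  destruct (closed_attains_min d D x0 Hcl Hsub (ex_intro _ _ Dx0) Sx0) as [b Hb].
  assert (Hyx0 : dot d y x0 < 1).
  { pose proof (sphere_dot_bound d y x0 Sy Sx0).
    destruct (Req_dec (dot d y x0) 1) as [E|E]; [| lra]. exfalso.
    assert (Ey : y = x0) by (apply sphere_eq with d; assumption).
    rewrite Ey, dot_comm in Hey. lra. }
  pose proof (proj2 Hb y Dy). pose proof (convex_dot_gt d D b x0 HD (proj1 Hb) Dx0).
  exists b. apply boundary_of_support with (tangent d b x0).
  apply min_support; [exact HD | exact Sx0 | exact Hb | lra].
Qed.

Lemma tilted_hemisphere_bound d m p n c : on_sphere d m -> on_sphere d p -> on_sphere d n ->
  dot d p n = 0 -> 0 <= c < 1 ->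
  0 <= dot d m p -> 0 <= c * dot d m p + csin c * dot d m n -> - c <= dot d m n.
Proof.
  intros Sm Sp Sn Hpn Hc Ha Hb.
  pose proof (bessel d m p n Sm Sp Sn Hpn) as B.
  pose proof (csin_pos c ltac:(lra)) as Hs. pose proof (csin_sq c ltac:(lra)) as Hss.
  set (s := csin c) in *. set (x := dot d m p) in *. set (y := dot d m n) in *.
  destruct (Rle_or_lt 0 y) as [h|h]; [lra |].
  assert (P : s * s * (y * y) <= c * c * (x * x)).
  { assert (0 <= s * (- y)) by (apply Rmult_le_pos; lra).
    assert (s * (- y) <= c * x) by lra. nra. }
  assert (y * y <= c * c) by nra. nra.
Qed.

Lemma tangent_hemisphere d p q x : on_sphere d p -> on_sphere d q -> on_sphere d x ->
  0 <= dot d p q < 1 -> dot d p q <= dot d x q -> 0 <= dot d x (tangent d p q).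
Proof.
  intros Sp Sq Sx Hk Hxq.
  assert (Hk' : -1 < dot d p q < 1) by lra.
  rewrite dot_tangent, div_nonneg_iff by (try apply csin_pos; assumption).
  pose proof (sphere_dot_bound d x p Sx Sp). nra.
Qed.

Lemma is_glb_attained (E : R -> Prop) w : E w -> (forall t, E t -> w <= t) -> is_glb E w.
Proof. intros Ew Hlow; split; [exact Hlow | intros b Hb; apply Hb, Ew]. Qed.

Lemma width_le_thickness d n C w m : on_sphere d n -> width_K d n C w ->
  lune_partner d n C m -> w <= acos (- dot d n m).
Proof. intros Sn Hw Hm. apply (proj1 (proj1 (width_K_iff d n C w Sn) Hw)). exists m; auto. Qed.

Lemma width_ge d n C w e : on_sphere d n -> width_K d n C w -> -1 <= e <= 1 ->
  (forall m, lune_partner d n C m -> - dot d n m <= e) -> acos e <= w.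
Proof.
  intros Sn Hw He Hm. apply (proj2 (proj1 (width_K_iff d n C w Sn) Hw)).
  intros t [m [Pm ->]]. specialize (Hm m Pm). pose proof (proj1 (proj2 Pm)).
  apply acos_antimono; lra.
Qed.

Lemma diameter_dot_ge d D delta x y : subset_sphere d D -> diameter d D delta ->
  0 <= delta <= PI -> D x -> D y -> cos delta <= dot d x y.
Proof.
  intros Hsub Hdiam Hd Dx Dy. apply sdist_le_iff; auto.
  apply (proj1 Hdiam). exists x, y; auto.
Qed.

Lemma boundary_in d D p : closed d D -> boundary_pt d D p -> D p.
Proof. intros Hcl [Hp _]; apply Hcl, Hp. Qed.

Lemma constant_diameter_width d D delta : 0 < delta < PI / 2 -> smooth d D ->
  constant_diameter d D delta -> constant_width d D delta.
Proof.
  intros Hdl Hsm [[[Hsub _] [Hcl _]] [Hdiam Hfar]] n [p0 Hn].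
  pose proof PI_RGT_0. assert (Hd : 0 <= delta <= PI) by lra.
  pose proof (cos_acute delta Hdl) as Hc. set (c := cos delta) in *.
  pose proof Hn as [Sn [_ [[Sp0 _] Dp0]]].
  pose proof (boundary_of_support d n D p0 Hn) as Bp0.
  destruct (Hfar p0 Bp0) as [p1 [Bp1 Hp01]].
  pose proof (boundary_in d D p1 Hcl Bp1) as Dp1. pose proof (Hsub _ Dp1) as Sp1.
  apply sdist_eq_iff in Hp01; [fold c in Hp01 | assumption ..].
  assert (Hp01' : -1 < dot d p0 p1 < 1) by lra.
  assert (Hp10' : -1 < dot d p1 p0 < 1) by (rewrite dot_comm; lra).
  assert (Near : forall x y, D x -> D y -> c <= dot d x y)
    by (intros x y Dx Dy; apply (diameter_dot_ge d D); assumption).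
  set (n' := tangent d p0 p1).
  assert (Sn' : on_sphere d n') by (apply tangent_sphere; assumption).
  assert (Hp0n' : dot d p0 n' = 0) by (apply tangent_orth; assumption).
  assert (Hn' : supports_at d n' D p0).
  { split; [exact Sn' |].
    split; [| split; [split; [exact Sp0 | rewrite dot_comm; exact Hp0n'] | exact Dp0]].
    intros x Dx; split; [apply Hsub, Dx |].
    rewrite dot_comm; apply tangent_hemisphere; [assumption | assumption | apply Hsub, Dx | lra |].
    rewrite Hp01; apply Near; assumption. }
  destruct (Hsm p0 Bp0) as [_ [n0 [_ Uniq]]].
  assert (En : n = n') by (rewrite (Uniq n Hn), (Uniq n' Hn'); reflexivity).
  subst n. apply width_K_iff; [exact Sn' |]. apply is_glb_attained.
  - (* the lune bounded by the tangent from p1 towards p0 has thickness delta *)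
    assert (Swap : dot d n' (tangent d p1 p0) = - c)
      by (unfold n'; rewrite tangent_dot_swap; [rewrite Hp01 |..]; auto).
    exists (tangent d p1 p0). split.
    + split; [apply tangent_sphere; assumption |]. split; [rewrite Swap; lra |].
      intros x Dx. split; [apply Hn', Dx |]. split; [apply Hsub, Dx |].
      rewrite dot_comm; apply tangent_hemisphere; [assumption | assumption | apply Hsub, Dx | | ];
        rewrite dot_comm, Hp01; [lra | apply Near; assumption].
    + rewrite Swap, Ropp_involutive. symmetry; apply acos_cos, Hd.
  - intros t [m [[Sm [Hnm HC]] ->]].
    apply le_acos_iff; [exact Hd | lra |]. fold c.
    assert (Hmn' : - c <= dot d m n').
    { apply (tilted_hemisphere_bound d m p0 n' c Sm Sp0 Sn' Hp0n'); [lra | apply HC, Dp0 |].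
      rewrite <- Hp01. unfold n'. rewrite <- dot_tangent_decomp by exact Hp01'. apply HC, Dp1. }
    rewrite dot_comm; lra.
Qed.

Lemma width_dot_ge d D delta a x : 0 < delta < PI / 2 -> convex_body d D ->
  constant_width d D delta -> D a -> D x -> cos delta <= dot d x a.
Proof.
  intros Hdl [HD [Hcl _]] Hcw Da Dx. pose proof HD as [Hsub _].
  pose proof PI_RGT_0. pose proof (cos_acute delta Hdl) as Hc.
  pose proof (Hsub _ Da) as Sa.
  destruct (closed_attains_min d D a Hcl Hsub (ex_intro _ _ Da) Sa) as [b Hb].
  apply Rle_trans with (dot d b a); [| apply Hb, Dx].
  pose proof (Hsub _ (proj1 Hb)) as Sb.
  pose proof (convex_dot_gt d D b a HD (proj1 Hb) Da) as Hk1.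
  destruct (Rlt_or_le (dot d b a) 1) as [Hk2|Hk2]; [| lra].
  assert (Hk : -1 < dot d b a < 1) by lra.
  set (w := tangent d b a).
  assert (Hw : supports_at d w D b) by (apply min_support; assumption).
  pose proof Hw as [Sw _].
  assert (Hbw : dot d b w = 0) by (apply tangent_orth; assumption).
  assert (Width := Hcw w (ex_intro _ b Hw)).
  assert (Partner : forall m, lune_partner d w D m -> 0 <= dot d m b /\
    0 <= dot d b a * dot d m b + csin (dot d b a) * dot d m w).
  { intros m [_ [_ HC]]. split; [apply HC, (proj1 Hb) |].
    unfold w. rewrite <- dot_tangent_decomp by exact Hk. apply HC, Da. }
  destruct (Rle_or_lt (dot d b a) 0) as [Hk0|Hk0].
  - (* b.a <= 0 would force a lune of thickness >= pi/2 *)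
    exfalso. enough (acos 0 <= delta) by (rewrite acos_0 in *; lra).
    apply (width_ge d w D delta 0 Sw Width); [lra |].
    intros m Pm. destruct (Partner m Pm) as [H1 H2].
    pose proof (csin_pos _ Hk). assert (0 <= dot d m w) by nra.
    rewrite dot_comm; lra.
  - apply acos_le_iff; [lra | lra |].
    apply (width_ge d w D delta _ Sw Width); [lra |].
    intros m Pm. destruct (Partner m Pm) as [H1 H2].
    pose proof (tilted_hemisphere_bound d m b w (dot d b a) (proj1 Pm) Sb Sw Hbw
      ltac:(lra) H1 H2).
    rewrite dot_comm; lra.
Qed.

(* Under constant width delta and smoothness, every boundary point has a boundary point
   at distance exactly delta: the point of D farthest from it. *)
Lemma width_far_point d D delta p : 0 < delta < PI / 2 -> convex_body d D -> smooth d D ->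
  constant_width d D delta -> boundary_pt d D p ->
  exists p', boundary_pt d D p' /\ dot d p p' = cos delta.
Proof.
  intros Hdl HB Hsm Hcw Bp. pose proof HB as [HD [Hcl _]]. pose proof HD as [Hsub _].
  pose proof PI_RGT_0. pose proof (cos_acute delta Hdl) as Hc. set (c := cos delta) in *.
  destruct (Hsm p Bp) as [_ [n [Hn _]]]. pose proof Hn as [Sn [HDn [[Sp Hnp] Dp]]].
  assert (Hpn : dot d p n = 0) by (rewrite dot_comm; exact Hnp).
  destruct (closed_attains_min d D p Hcl Hsub (ex_intro _ _ Dp) Sp) as [b Hb].
  pose proof (width_dot_ge d D delta p b Hdl HB Hcw Dp (proj1 Hb)) as Hk.
  fold c in Hk.
  assert (Hkc : dot d b p <= c).
  { apply Rnot_lt_le. intros Hck.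
    (* otherwise tilting n towards p by less than the gap gives too thin a lune *)
    set (k0 := Rmin (dot d b p) ((c + 1) / 2)).
    assert (Hk0 : c < k0 /\ k0 < 1 /\ k0 <= dot d b p)
      by (unfold k0, Rmin; destruct Rle_dec; lra).
    assert (Hk0' : -1 < k0 < 1) by lra.
    pose proof (csin_pos k0 Hk0') as Hs. pose proof (csin_sq k0 Hk0') as Hss.
    set (s := csin k0) in *.
    set (m := lin s p (- k0) n).
    assert (Sm : on_sphere d m) by (apply orthonormal_lin_sphere; auto; lra).
    assert (Hnm : dot d n m = - k0).
    { unfold m; rewrite dot_lin_r, (dot_comm d n p), Hpn, (proj2 Sn); ring. }
    assert (Pm : lune_partner d n D m).
    { split; [exact Sm | split; [lra |]]. intros x Dx. split; [apply HDn, Dx |].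
      split; [apply Hsub, Dx |].
      assert (Sq : on_sphere d (lin k0 p s n))
        by (apply orthonormal_lin_sphere; auto; lra).
      pose proof (sphere_dot_bound d x _ (Hsub _ Dx) Sq) as Hxq.
      pose proof (proj2 Hb x Dx) as Hxp.
      rewrite dot_lin_r in Hxq.
      unfold m; rewrite dot_lin_l, (dot_comm d p x), (dot_comm d n x).
      apply Rmult_le_reg_l with s; [exact Hs | nra]. }
    pose proof (width_le_thickness d n D delta m Sn (Hcw n (ex_intro _ p Hn)) Pm) as Hw.
    rewrite Hnm, Ropp_involutive in Hw.
    apply le_acos_iff in Hw; [fold c in Hw; lra | lra | lra]. }
  assert (Hbp : dot d b p = c) by lra.
  exists b. split.
  - apply (boundary_of_support d (tangent d b p)), min_support; auto; lra.
  - rewrite dot_comm; exact Hbp.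
Qed.

Lemma constant_width_diameter d D delta : (1 <= d)%nat -> 0 < delta < PI / 2 ->
  convex_body d D -> smooth d D -> constant_width d D delta -> constant_diameter d D delta.
Proof.
  intros Hd Hdl HB Hsm Hcw. pose proof HB as [[Hsub _] [Hcl _]].
  pose proof PI_RGT_0. assert (Hdelta : 0 <= delta <= PI) by lra.
  assert (Far : forall p, boundary_pt d D p ->
    exists p', boundary_pt d D p' /\ sdist d p p' = delta).
  { intros p Bp. destruct (width_far_point d D delta p Hdl HB Hsm Hcw Bp) as [p' [Bp' Hpp']].
    exists p'. split; [exact Bp' |].
    apply sdist_eq_iff; auto; apply Hsub, boundary_in with d; assumption. }
  split; [exact HB | split; [split | exact Far]].
  - intros t [x [y [Dx [Dy ->]]]]. apply sdist_le_iff; auto.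
    rewrite dot_comm; apply (width_dot_ge d D); assumption.
  - intros u Hu. destruct (exists_boundary_pt d D Hd HB) as [p Bp].
    destruct (Far p Bp) as [p' [Bp' Hpp']]. rewrite <- Hpp'. apply Hu.
    exists p, p'. split; [apply boundary_in with d; assumption |].
    split; [apply boundary_in with d; assumption | reflexivity].
Qed.

Theorem theorem1 (d : nat) (delta : R) (D : set) :
  (2 <= d)%nat -> 0 < delta < PI / 2 ->
  convex_body d D -> smooth d D ->
  (constant_diameter d D delta <-> constant_width d D delta).
Proof.
  intros Hd Hdl HB Hsm. split.
  - apply constant_diameter_width; assumption.
  - apply constant_width_diameter; [lia | assumption ..].
Qed.
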